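(* Let $F:[0,1]\to\mathbb R$ be measurable. Assume that for each $\varepsilon>0$ there is a countable collection $(S_j)_j$ of pairwise disjoint measurable subsets of $[0,1]$ such that $\sum_j\mathrm{meas}(S_j)\geq1-\varepsilon$ and, for each $j$ and each $y\in S_j$, $$\mathrm{meas}(\{x\in S_j\colon F(x)=F(y)\})\leq\varepsilon\,\mathrm{meas}(S_j).$$ Then the cumulative distribution function of $F_\ast(\nu)$ is continuous, where $\nu$ is Lebesgue measure on $[0,1]$.
   Context: $\mathrm{meas}$ denotes Lebesgue measure. *)

From HB Require Import structures.
From mathcomp Require Import all_boot all_order all_algebra.
From mathcomp Require Import all_classical all_reals all_analysis.
Set Implicit Arguments. Unset Strict Implicit. Unset Printing Implicit Defensive.
Import Order.TTheory GRing.Theory Num.Theory.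
Local Open Scope classical_set_scope.
Local Open Scope ring_scope.

Definition nu01 (R : realType) : set R -> \bar R :=
  mrestr (@lebesgue_measure R) (measurable_itv `[(0:R), 1]).

Definition cdf_push (R : realType) (F : R -> R) (t : R) : R :=
  fine (pushforward (@nu01 R) F `]-oo, t]).

From HB Require Import structures.
From mathcomp Require Import all_boot all_order all_algebra.
From mathcomp Require Import all_classical all_reals all_analysis.
From mathcomp Require Import lra.
Set Implicit Arguments. Unset Strict Implicit. Unset Printing Implicit Defensive.
Import Order.TTheory GRing.Theory Num.Theory.
Import numFieldNormedType.Exports.
Local Open Scope classical_set_scope.
Local Open Scope ring_scope.

(* Every level set A = F^-1{c} is null.  Inside a block S_j it lies in a level
   set of F on S_j, so meas(A /\ S_j) <= eps meas(S_j); summing over the disjoint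
   blocks gives meas(A /\ U) <= eps for their union U, and the rest of A lies in
   [0,1] \ U, of measure at most eps.  Null level sets make the distribution
   function continuous: |cdf s - cdf t| is at most the measure of
   F^-1 ]t - delta, t + delta], which decreases to meas(F^-1{t}) = 0. *)

Section level_sets.
Context d (T : measurableType d) (R : realType).
Variable mu : {measure set T -> \bar R}.

Lemma measure_setI_bigcup_le (A : set T) (S : nat -> set T) (eps : R) :
  0 <= eps -> measurable A -> (forall j, measurable (S j)) -> trivIset setT S ->
  (forall j, (mu (A `&` S j) <= eps%:E * mu (S j))%E) ->
  (mu (A `&` \bigcup_j S j) <= eps%:E * mu (\bigcup_j S j))%E.
Proof.
move=> eps0 mA mS tS le_eps.
have mAS j : measurable (A `&` S j) by exact: measurableI.
rewrite setI_bigcupr !measure_semi_bigcup//; last 3 first.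
- exact: bigcup_measurable.
- exact: trivIset_setIl.
- exact: bigcup_measurable.
rewrite -nneseriesZl; last by move=> j _; exact: measure_ge0.
by apply: lee_nneseries => [j _ _|j _]; [exact: measure_ge0|exact: le_eps].
Qed.

Variables (D : set T) (F : T -> R).
Hypotheses (mD : measurable D) (mF : measurable_fun D F) (muD1 : (mu D <= 1)%E).

Lemma level_set_measure_le (eps : R) (S : nat -> set T) (c : R) :
  0 <= eps -> (forall j, measurable (S j)) -> (forall j, S j `<=` D) ->
  trivIset setT S -> ((1 - eps)%:E <= \sum_(0 <= j <oo) mu (S j))%E ->
  (forall j y, S j y -> (mu [set x | S j x /\ F x = F y] <= eps%:E * mu (S j))%E) ->
  (mu (D `&` F @^-1` [set c]) <= (2 * eps)%:E)%E.
Proof.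
move=> eps0 mS SD tS cover small.
set A := D `&` F @^-1` [set c]; set U := \bigcup_j S j.
have mA : measurable A := mF mD (measurable_set1 c).
have mU : measurable U := bigcup_measurable (fun j _ => mS j).
have UD : U `<=` D by move=> x [j _ /SD].
have AS_le j : (mu (A `&` S j) <= eps%:E * mu (S j))%E.
  have [[y [[_ Fy] Sy]]|AS0] := pselect (exists y, (A `&` S j) y); last first.
    have -> : A `&` S j = set0.
      by apply/seteqP; split=> x // ASx; apply: AS0; exists x.
    by rewrite measure0 mule_ge0.
  apply: le_trans (small j y Sy); apply: le_measure; rewrite ?inE.
  - exact: measurableI.
  - have -> : [set x | S j x /\ F x = F y] = S j `&` (D `&` F @^-1` [set F y]).
      apply/seteqP; split=> [x [Sx Fx]|x [Sx [_ Fx]]] //.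
      by split=> //; split; [exact: SD Sx|].
    exact: measurableI (mS j) (mF mD (measurable_set1 _)).
  - by move=> x [[_ Fx] Sx]; split=> //; rewrite Fx Fy.
have AU : (mu (A `&` U) <= eps%:E * mu U)%E by exact: measure_setI_bigcup_le.
have AnotU : (mu (A `\` U) <= mu D - mu U)%E.
  rewrite -[mu U](congr1 mu (setIidr UD)) -measureD //; last first.
    by rewrite (le_lt_trans muD1) ?ltry.
  by apply: le_measure; rewrite ?inE; [exact: measurableD|exact: measurableD|move=> x [[]]].
have muU : (mu U = \sum_(0 <= j <oo) mu (S j))%E by exact: measure_semi_bigcup.
have UleD : (mu U <= mu D)%E by apply: le_measure; rewrite ?inE.
have finD : mu D \is a fin_num.
  by rewrite ge0_fin_numE ?measure_ge0 // (le_lt_trans muD1) ?ltry.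
have finU : mu U \is a fin_num.
  by rewrite ge0_fin_numE ?measure_ge0 // (le_lt_trans UleD) -?ge0_fin_numE ?measure_ge0.
rewrite (measureDI mu mA mU); apply: le_trans (leeD AnotU AU) _.
move: muD1 cover UleD; rewrite -muU -(fineK finD) -(fineK finU).
rewrite -EFinB -EFinM -EFinD !lee_fin; nra.
Qed.

Lemma level_set_null :
  (forall eps : R, 0 < eps ->
     exists S : nat -> set T,
       [/\ (forall j, measurable (S j)), (forall j, S j `<=` D), trivIset setT S,
           ((1 - eps)%:E <= \sum_(0 <= j <oo) mu (S j))%E &
           (forall j y, S j y ->
              (mu [set x | S j x /\ F x = F y] <= eps%:E * mu (S j))%E)]) ->
  forall c, mu (D `&` F @^-1` [set c]) = 0%E.
Proof.
move=> small_partition c; apply/eqP; rewrite eq_le measure_ge0 andbT.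
apply/lee_addgt0Pr => e e0; rewrite add0e.
have e20 : 0 < e / 2 by rewrite divr_gt0.
have [S [mS SD tS cover small]] := small_partition _ e20.
have -> : e = 2 * (e / 2) by rewrite mulrC divfK.
exact: level_set_measure_le (ltW e20) mS SD tS cover small.
Qed.

End level_sets.

Lemma bigcap_itvoc_shrink (R : realType) (t : R) :
  \bigcap_n [set` `]t - n.+1%:R^-1, t + n.+1%:R^-1]] = [set t].
Proof.
apply/seteqP; split=> [x tx|x -> n _]; last first.
  have : 0 < n.+1%:R^-1 :> R by rewrite invr_gt0 ltr0n.
  by rewrite /= in_itv /=; move: n.+1%:R^-1 => e e0; apply/andP; split; lra.
have tx_itv n : t - n.+1%:R^-1 < x <= t + n.+1%:R^-1.
  by have := tx n I; rewrite /= in_itv.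
apply/eqP; rewrite eq_le; apply/andP; split; rewrite leNgt; apply/negP.
- move=> /ltr_add_invr[k]; have /andP[] := tx_itv k.
  by move: k.+1%:R^-1 => e *; lra.
- move=> /ltr_add_invr[k]; have /andP[] := tx_itv k.
  by move: k.+1%:R^-1 => e *; lra.
Qed.

Section cdf_on.
Context d (T : measurableType d) (R : realType).
Variables (mu : {measure set T -> \bar R}) (D : set T) (F : T -> R).
Hypotheses (mD : measurable D) (mF : measurable_fun D F) (muD : (mu D < +oo)%E).

Definition cdf_on (t : R) : R := fine (mu (D `&` F @^-1` `]-oo, t])).

Lemma measure_preimage_fin_num (B : set R) : measurable B ->
  mu (D `&` F @^-1` B) \is a fin_num.
Proof.
move=> mB; rewrite ge0_fin_numE ?measure_ge0 // (le_lt_trans _ muD) //.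
by apply: le_measure; rewrite ?inE //; exact: mF.
Qed.

Lemma le_fine_measure_preimage (B C : set R) : measurable B -> measurable C ->
  B `<=` C -> fine (mu (D `&` F @^-1` B)) <= fine (mu (D `&` F @^-1` C)).
Proof.
move=> mB mC BC.
rewrite fine_le ?(measure_preimage_fin_num mB) ?(measure_preimage_fin_num mC) //.
by apply: le_measure; rewrite ?inE; [exact: mF|exact: mF|move=> x [Dx /BC]].
Qed.

Lemma cdf_onB (a b : R) : a <= b ->
  cdf_on b - cdf_on a = fine (mu (D `&` F @^-1` `]a, b])).
Proof.
move=> ab; apply/eqP; rewrite subr_eq addrC /cdf_on.
rewrite -fineD ?measure_preimage_fin_num //.
rewrite (@itv_bndbnd_setU _ _ _ (BRight a)) ?bnd_simp // preimage_setU setIUr.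
rewrite measureU //; [exact: mF|exact: mF|].
apply/seteqP; split=> x // [[_]]; rewrite /= !in_itv /= => Fxa [_ /andP[aFx _]].
by rewrite ltNge Fxa in aFx.
Qed.

Lemma dist_cdf_on_le (s t delta : R) : `|s - t| <= delta ->
  `|cdf_on s - cdf_on t| <= fine (mu (D `&` F @^-1` `]t - delta, t + delta])).
Proof.
move=> st; have := le_trans (normr_ge0 _) st; move: st; rewrite ler_norml.
move=> /andP[st1 st2] delta0; have [ts|st] := leP t s.
- rewrite cdf_onB // ger0_norm ?fine_ge0 ?measure_ge0 //.
  by apply: le_fine_measure_preimage => //; apply: subset_itv; rewrite bnd_simp; lra.
- rewrite distrC (cdf_onB (ltW st)) ger0_norm ?fine_ge0 ?measure_ge0 //.
  by apply: le_fine_measure_preimage => //; apply: subset_itv; rewrite bnd_simp; lra.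
Qed.

Lemma cvg_measure_preimage_shrink (t : R) :
  mu (D `&` F @^-1` `]t - n.+1%:R^-1, t + n.+1%:R^-1]) @[n --> \oo] -->
  mu (D `&` F @^-1` [set t]).
Proof.
have capE : \bigcap_n (D `&` F @^-1` `]t - n.+1%:R^-1, t + n.+1%:R^-1]) =
            D `&` F @^-1` [set t].
  rewrite -bigcap_itvoc_shrink; apply/seteqP; split=> [x Ix|x [Dx Fx] n _].
    by split=> [|n _]; [exact: (Ix 0%N I).1|exact: (Ix n I).2].
  by split=> //; exact: Fx.
rewrite -capE; apply: nonincreasing_cvg_mu.
- by rewrite -ge0_fin_numE ?measure_ge0 //; exact: measure_preimage_fin_num.
- by move=> n; exact: mF.
- by apply: bigcapT_measurable => n; exact: mF.
- move=> m n mn; apply/subsetPset; apply: setIS; apply: preimage_subset.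
  have : n.+1%:R^-1 <= m.+1%:R^-1 :> R by rewrite lef_pV2 ?posrE ?ler_nat.
  by move: n.+1%:R^-1 m.+1%:R^-1 => en em enm; apply: subset_itv; rewrite bnd_simp; lra.
Qed.

Lemma continuous_cdf_on : (forall t, mu (D `&` F @^-1` [set t]) = 0%E) ->
  continuous cdf_on.
Proof.
move=> atomless t; apply/cvgrPdist_lt => e e0.
have := @cvg_measure_preimage_shrink t; rewrite atomless => /fine_cvgP[_].
move=> /cvgrPdist_lt/(_ e e0)[N _ /(_ N (leqnn N))]; rewrite /= sub0r normrN.
rewrite ger0_norm ?fine_ge0 ?measure_ge0 // => small.
apply/nbhs_ballP; exists N.+1%:R^-1 => [|s]; first by rewrite /= invr_gt0.
rewrite /ball /= distrC => /ltW ts.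
by rewrite distrC; exact: le_lt_trans (dist_cdf_on_le ts) small.
Qed.

End cdf_on.

Theorem lemma3p6 (R : realType) (F : R -> R) :
  measurable_fun `[(0:R), 1] F ->
  (forall eps : R, 0 < eps ->
     exists S : nat -> set R,
       [/\ (forall j, measurable (S j)),
           (forall j, S j `<=` `[(0:R), 1]),
           trivIset setT S,
           ((1 - eps)%:E <= \sum_(0 <= j <oo) (@lebesgue_measure R) (S j))%E &
           (forall j y, S j y ->
              ((@lebesgue_measure R) [set x | S j x /\ F x = F y]
               <= eps%:E * (@lebesgue_measure R) (S j))%E)]) ->
  continuous (cdf_push F : R -> R).
Proof.
move=> mF small_partition.
pose D : set R := [set` `[(0:R), 1]].
pose L : {measure set (measurableTypeR R) -> \bar R} := lebesgue_measure.
have LD : L D = 1%:E.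
  by have := @lebesgue_measure_itv R `[(0:R), 1]; rewrite /= lte_fin ltr01 oppr0 adde0.
have -> : cdf_push F = cdf_on L D F.
  by apply/funext => t; rewrite /cdf_push /pushforward /nu01 /mrestr setIC.
apply: continuous_cdf_on; [exact: measurable_itv|exact: mF|by rewrite LD ltry|].
by apply: level_set_null => //; [exact: measurable_itv|rewrite LD].
Qed.
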